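(* Let $\Gamma$ be a nonempty index set, and for each $\gamma\in\Gamma$ let $A_\gamma,B_\gamma$ be commutative groups. Put $A=\bigoplus_{\gamma}A_\gamma$ and $B=\prod_\gamma B_\gamma$, and regard each $f_\bullet=(f_\gamma)_\gamma\in\prod_\gamma B_\gamma^{A_\gamma}$ as the map $A\to B$, $(x_\gamma)_\gamma\mapsto(f_\gamma(x_\gamma))_\gamma$, so that $\prod_\gamma B_\gamma^{A_\gamma}\subseteq B^A$. Suppose that for every $\gamma\in\Gamma$, $\operatorname{Hom}(\bigoplus_{\lambda\ne\gamma}A_\lambda,B_\gamma)=\{0\}$. Then: (a) $\operatorname{fdeg}(f_\bullet)=\sup_\gamma\operatorname{fdeg}(f_\gamma)$ for all $f_\bullet=(f_\gamma)\in\prod_\gamma B_\gamma^{A_\gamma}$; (b) $\mathcal F_n(A,B)=\prod_\gamma\mathcal F_n(A_\gamma,B_\gamma)$ for every $n\in\mathbb N\cup\{-\infty\}$; (c) $\mathcal F(A,B)=\bigcup_{n<\infty}\prod_\gamma\mathcal F_n(A_\gamma,B_\gamma)\subseteq\prod_\gamma\mathcal F(A_\gamma,B_\gamma)$.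
   Context: For commutative groups $A,B$, $B^A$ denotes the commutative group (under pointwise addition) of all maps $A\to B$. For $a\in A$, the difference operator $\Delta_a:B^A\to B^A$ is $(\Delta_a f)(x)=f(x+a)-f(x)$. Let $\widetilde{\mathbb N}=\mathbb N\cup\{-\infty,\infty\}$ ($\mathbb N=\{0,1,2,\dots\}$), totally ordered with $-\infty$ least and $\infty$ greatest. The functional degree $\operatorname{fdeg}(f)\in\widetilde{\mathbb N}$ of $f\in B^A$ is: $-\infty$ if $f=0$; otherwise the least $n\in\mathbb N$ such that $\Delta_{a_1}\cdots\Delta_{a_{n+1}}f=0$ for all $a_1,\dots,a_{n+1}\in A$; and $\infty$ if no such $n$ exists. For $n\in\widetilde{\mathbb N}$, $\mathcal F_n(A,B)=\{f\in B^A:\operatorname{fdeg}(f)\le n\}$, and $\mathcal F(A,B)=\bigcup_{n<\infty}\mathcal F_n(A,B)$ (the maps of finite functional degree). *)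

From HB Require Import structures.
From mathcomp Require Import all_boot all_order all_algebra.
From mathcomp Require Import boolp.
From Stdlib Require List.
Set Implicit Arguments. Unset Strict Implicit. Unset Printing Implicit Defensive.
Import GRing.Theory.
Local Open Scope ring_scope.

Inductive extnat := NegInf | Fin of nat | PosInf.

Definition ext_le (x y : extnat) : Prop :=
  match x, y with
  | NegInf, _ => True
  | _, PosInf => True
  | Fin m, Fin n => (m <= n)%N
  | _, _ => False
  end.

Definition is_sup (I : Type) (S : I -> extnat) (d : extnat) : Prop :=
  (forall i, ext_le (S i) d) /\
  (forall e, (forall i, ext_le (S i) e) -> ext_le d e).

Section FDeg.
Variables (A B : Type) (addA : A -> A -> A) (subB : B -> B -> B) (zeroB : B).

Definition Delta (a : A) (f : A -> B) : A -> B := fun x => subB (f (addA x a)) (f x).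

Definition iterDelta (s : seq A) (f : A -> B) : A -> B := foldr Delta f s.

Definition vanishes (k : nat) (f : A -> B) : Prop :=
  forall s : seq A, size s = k -> iterDelta s f = (fun _ => zeroB).

Definition fdeg (f : A -> B) : extnat :=
  match pselect (f = (fun _ => zeroB)) with
  | left _ => NegInf
  | right _ =>
    match pselect (exists n : nat, vanishes n.+1 f) with
    | left h =>
        Fin (@ex_minn (fun n => `[< vanishes n.+1 f >])
               (let: ex_intro n hn := h in ex_intro _ n (asboolT hn)))
    | right _ => PosInf
    end
  end.
End FDeg.

Definition fdegZ (A B : zmodType) (f : A -> B) : extnat :=
  fdeg (fun x y : A => x + y) (fun u v : B => u - v) 0 f.

Record dsum (I : Type) (A : I -> zmodType) := DSum {
  dval :> forall i, A i;
  dsuppP : exists s : seq I, forall i, ~ List.In i s -> dval i = 0 }.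

Lemma dsum_add_proof (I : Type) (A : I -> zmodType) (x y : dsum A) :
  exists s : seq I, forall i, ~ List.In i s -> dval x i + dval y i = 0.
Proof.
case: (dsuppP x) => s1 h1; case: (dsuppP y) => s2 h2.
exists (s1 ++ s2)%list => i hi.
rewrite h1 ?h2 ?addr0 // => H; apply: hi; apply List.in_or_app; tauto.
Qed.

Definition dsum_add (I : Type) (A : I -> zmodType) (x y : dsum A) : dsum A :=
  DSum (dsum_add_proof x y).

Definition dprod (I : Type) (B : I -> zmodType) : Type := forall i, B i.
Definition dprod_sub (I : Type) (B : I -> zmodType) (u v : dprod B) : dprod B :=
  fun i => u i - v i.
Definition dprod_zero (I : Type) (B : I -> zmodType) : dprod B := fun i => 0.

Definition fdegS (I : Type) (A B : I -> zmodType) (F : dsum A -> dprod B) : extnat :=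
  fdeg (@dsum_add I A) (@dprod_sub I B) (dprod_zero B) F.

Definition prodmap (I : Type) (A B : I -> zmodType) (f : forall i, A i -> B i)
  : dsum A -> dprod B := fun x i => f i (dval x i).

Definition hom_trivial (I : Type) (A B : I -> zmodType) (g : I) : Prop :=
  forall h : dsum (fun l : {l : I | l <> g} => A (sval l)) -> B g,
    (forall x y, h (dsum_add x y) = h x + h y) -> forall x, h x = 0.

From mathcomp Require Import all_boot all_order all_algebra boolp.
From Stdlib Require List.
Set Implicit Arguments. Unset Strict Implicit. Unset Printing Implicit Defensive.
Import GRing.Theory.
Local Open Scope ring_scope.

(* Write "F vanishes at order k" when all k-fold iterated differences of F
   are zero; then fdeg F <= e is a statement about the order at which F
   vanishes (fdeg_leP), so everything reduces to vanishing orders.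
   1. Iterated differences of a product map f_• are computed componentwise,
      and differences of f_g are those of f_• along the summand A_g; hence
      f_• vanishes at order k iff every f_g does (vanishes_prodmap).  This
      gives fdeg f_• <= e <-> forall g, fdeg f_g <= e, i.e. part (a).
   2. Rigidity: if every additive map D -> C is zero, a map D -> C vanishing
      at some finite order is translation invariant (by induction on the
      order: the first differences Delta_c G are translation invariant, so
      c |-> Delta_c G 0 is additive, hence zero).
   3. Writing x = x_g + (x restricted to the other summands), rigidity for
      D = ⊕_{l<>g} A_l and C = B_g shows that the g-th component of a map
      F : A -> B of finite degree depends only on x_g: F is a product map. *)

Definition deg_bound (e : extnat) (van : nat -> Prop) : Prop :=
  match e with NegInf => van 0%N | Fin n => van n.+1 | PosInf => True end.

Lemma deg_bound_finite (e : extnat) (van : nat -> Prop) :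
  e <> PosInf -> deg_bound e van -> exists k, van k.
Proof. by case: e => [|n|] // _ H; eexists; exact: H. Qed.

Lemma ext_le_refl (e : extnat) : ext_le e e.
Proof. by case: e => //= n; rewrite leqnn. Qed.

Lemma is_sup_of_bounds (J : Type) (S : J -> extnat) (d : extnat) :
  (forall e, ext_le d e <-> forall j, ext_le (S j) e) -> is_sup S d.
Proof. by move=> H; split; [exact/H/ext_le_refl | move=> e /H]. Qed.

Section Vanishing.
Variables (A B : Type) (addA : A -> A -> A) (subB : B -> B -> B) (zeroB : B).
Hypothesis subB00 : subB zeroB zeroB = zeroB.
Local Notation van := (vanishes addA subB zeroB).

Lemma vanishesS k f : van k f -> van k.+1 f.
Proof.
move=> H [|a s] //= [hs]; rewrite (H s hs) /Delta.
by apply: funext => x.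
Qed.

Lemma vanishes_mono k m f : (k <= m)%N -> van k f -> van m f.
Proof.
elim: m => [|m IH]; first by rewrite leqn0 => /eqP ->.
by rewrite leq_eqVlt => /orP [/eqP -> //|]; rewrite ltnS => /IH H /H /vanishesS.
Qed.

Lemma vanishes0 f : van 0 f <-> f = (fun _ => zeroB).
Proof. by split=> [H | -> [|]] //; exact: (H [::]). Qed.

Lemma fdeg_leP f e : ext_le (fdeg addA subB zeroB f) e <-> deg_bound e (van^~ f).
Proof.
rewrite /fdeg; case: pselect => [f0 | fn0].
  have H0 : van 0 f by apply/vanishes0.
  by case: e => [|n|] //=; split => // _; apply: (vanishes_mono _ H0).
case: pselect => [hfin | hinf]; last first.
  by case: e => [|n|] //=; split => // H; [case: fn0; apply/vanishes0 | case: hinf; exists n].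
case: ex_minnP => m /asboolP Hm Hmin.
case: e => [|n|] //=; first by split => // /vanishes0.
by split => [hmn | Hn]; [apply: (vanishes_mono _ Hm) | apply/Hmin/asboolP].
Qed.
End Vanishing.

Lemma fdegZ_leP (A B : zmodType) (f : A -> B) e :
  ext_le (fdegZ f) e <->
  deg_bound e (fun k => vanishes (fun x y : A => x + y) (fun u v : B => u - v) 0 k f).
Proof. by apply: fdeg_leP; rewrite subrr. Qed.

Lemma fdegS_leP (I : Type) (A B : I -> zmodType) (F : dsum A -> dprod B) e :
  ext_le (fdegS F) e <->
  deg_bound e (fun k => vanishes (@dsum_add I A) (@dprod_sub I B) (dprod_zero B) k F).
Proof.
apply: fdeg_leP; apply: functional_extensionality_dep => i.
by rewrite /dprod_sub /dprod_zero subrr.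
Qed.

Section DirectSum.
Variables (I : Type) (C : I -> zmodType).

Lemma dsum_ext (x y : dsum C) : (forall i, x i = y i) -> x = y.
Proof.
case: x => x hx; case: y => y hy /= H.
have E : x = y by apply: functional_extensionality_dep.
by subst y; congr DSum; apply: Prop_irrelevance.
Qed.

Definition dsum_zero : dsum C := @DSum I C (fun i => 0) (ex_intro _ [::] (fun _ _ => erefl)).

Lemma dsum_add0 (x : dsum C) : dsum_add dsum_zero x = x.
Proof. by apply: dsum_ext => i /=; rewrite add0r. Qed.

Lemma dsum_addA (x y z : dsum C) :
  dsum_add x (dsum_add y z) = dsum_add (dsum_add x y) z.
Proof. by apply: dsum_ext => i /=; rewrite addrA. Qed.

Definition single_fun (g : I) (a : C g) (i : I) : C i :=
  match pselect (i = g) with left e => eq_rect_r C a e | right _ => 0 end.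

Lemma single_support (g : I) (a : C g) :
  exists s : seq I, forall i, ~ List.In i s -> single_fun a i = 0.
Proof.
exists [:: g] => i hi; rewrite /single_fun; case: pselect => // e.
by case: hi; left.
Qed.

Definition single (g : I) (a : C g) : dsum C := DSum (single_support a).

Lemma single_at (g : I) (a : C g) : single a g = a.
Proof.
rewrite /= /single_fun; case: pselect => // e.
by rewrite (Prop_irrelevance e erefl).
Qed.
End DirectSum.

Section ProductMaps.
Variables (I : Type) (A B : I -> zmodType).
Local Notation vanS := (vanishes (@dsum_add I A) (@dprod_sub I B) (dprod_zero B)).
Local Notation vanZ g := (vanishes (fun u v : A g => u + v) (fun u v : B g => u - v) 0).

Lemma iterDelta_prodmap (f : forall g, A g -> B g) s x g :
  iterDelta (@dsum_add I A) (@dprod_sub I B) s (prodmap f) x g =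
  iterDelta (fun u v : A g => u + v) (fun u v : B g => u - v)
    [seq dval a g | a <- s] (f g) (x g).
Proof. by elim: s x => [|a s IH] x //=; rewrite /Delta /dprod_sub !IH. Qed.

(* A product map vanishes at order k iff all its components do; for the
   converse direction, differences of f_g are read off along single g. *)
Lemma vanishes_prodmap (f : forall g, A g -> B g) k :
  vanS k (prodmap f) <-> forall g, vanZ g k (f g).
Proof.
split=> [H g s hs | H s hs].
- apply: funext => a.
  have := congr1 (fun F => F (single a) g)
            (H (map (@single I A g) s) (etrans (size_map _ _) hs)).
  rewrite /= iterDelta_prodmap -map_comp single_at.
  by rewrite (eq_map (@single_at I A g)) map_id.
- apply: funext => x; apply: functional_extensionality_dep => g.
  by rewrite iterDelta_prodmap (H g) // size_map.
Qed.

Lemma fdegS_prodmap_le (f : forall g, A g -> B g) e :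
  ext_le (fdegS (prodmap f)) e <-> forall g, ext_le (fdegZ (f g)) e.
Proof.
rewrite fdegS_leP; have Hg := fun g => fdegZ_leP (f g) e.
case: e Hg => [|n|] /= Hg; last by split=> // _ g; apply/Hg.
all: by rewrite vanishes_prodmap; split=> H g; apply/Hg; exact: H.
Qed.
End ProductMaps.

Section Rigidity.
Variables (D : Type) (addD : D -> D -> D) (zeroD : D) (C : zmodType).
Hypothesis add0D : forall x, addD zeroD x = x.
Hypothesis hom0 :
  forall h : D -> C, (forall x y, h (addD x y) = h x + h y) -> forall x, h x = 0.

Local Notation van := (vanishes addD (fun u v : C => u - v) 0).
Local Notation DeltaD := (Delta addD (fun u v : C => u - v)).

(* Inductively, each Delta_c G
   is translation invariant, so c |-> G c - G 0 = Delta_c G 0 is additive,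
   hence zero, and then Delta_c G x = Delta_c G 0 = 0. *)
Lemma vanishing_translation_invariant k (G : D -> C) :
  van k G -> forall x c, G (addD x c) = G x.
Proof.
elim: k G => [|k IH] G; first by move/vanishes0 => ->.
move=> HV.
have DeltaG_inv c x d : DeltaD c G (addD x d) = DeltaD c G x.
  apply: IH => s hs.
  have := HV (rcons s c); rewrite size_rcons hs => /(_ erefl).
  by rewrite /iterDelta foldr_rcons.
pose h c := DeltaD c G zeroD.
have h_additive c d : h (addD c d) = h c + h d.
  have := DeltaG_inv d zeroD c; rewrite /h /Delta !add0D => E.
  by rewrite -[G (addD c d)](subrK (G c)) E [RHS]addrC addrA.
move=> x c; apply/eqP; rewrite -subr_eq0; apply/eqP.
have := DeltaG_inv c zeroD x; rewrite add0D /Delta => ->.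
exact: hom0 h_additive c.
Qed.
End Rigidity.

Section Complement.
Variables (I : Type) (A B : I -> zmodType) (g : I).
Local Notation vanS := (vanishes (@dsum_add I A) (@dprod_sub I B) (dprod_zero B)).

Definition Acompl (l : {l : I | l <> g}) : zmodType := A (sval l).

Definition extend0_fun (c : dsum Acompl) (i : I) : A i :=
  match pselect (i = g) with left _ => 0 | right h => c (exist _ i h) end.

Lemma extend0_support (c : dsum Acompl) :
  exists s : seq I, forall i, ~ List.In i s -> extend0_fun c i = 0.
Proof.
case: (dsuppP c) => s hs; exists (map sval s) => i hi; rewrite /extend0_fun.
case: pselect => // h; apply: (hs (exist _ i h)) => hin; apply: hi.
exact: (List.in_map sval _ _ hin).
Qed.

Definition extend0 (c : dsum Acompl) : dsum A := DSum (extend0_support c).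

Lemma extend0_add (c d : dsum Acompl) :
  extend0 (dsum_add c d) = dsum_add (extend0 c) (extend0 d).
Proof.
by apply: dsum_ext => i /=; rewrite /extend0_fun; case: pselect => //= _; rewrite addr0.
Qed.

Definition compl_index (i : I) : option {l : I | l <> g} :=
  match pselect (i <> g) with left h => Some (exist _ i h) | right _ => None end.

Lemma in_compl_index (l : {l : I | l <> g}) (s : seq I) :
  List.In (sval l) s -> List.In l (pmap compl_index s).
Proof.
elim: s => [|a s IH] //= [E | hin].
  clear IH; subst a; rewrite /compl_index; case: pselect => h /=; last by case: (h (svalP l)).
  by left; move: h; case: l => l hl h /=; congr exist; apply: Prop_irrelevance.
by case: (compl_index a) => [y|] /=; [right|]; exact: IH.
Qed.

Lemma restrict_support (x : dsum A) :
  exists s, forall l : {l : I | l <> g}, ~ List.In l s -> x (sval l) = 0.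
Proof.
case: (dsuppP x) => s hs; exists (pmap compl_index s) => l hl.
by apply: hs => hin; apply: hl; exact: in_compl_index.
Qed.

Definition restrict (x : dsum A) : dsum Acompl := @DSum _ Acompl _ (restrict_support x).

Lemma dsum_split (x : dsum A) : x = dsum_add (single (x g)) (extend0 (restrict x)).
Proof.
apply: dsum_ext => i /=; rewrite /single_fun /extend0_fun.
by case: pselect => [e|h] /=; [subst i; rewrite addr0 | rewrite add0r].
Qed.

Lemma iterDelta_extend0 (F : dsum A -> dprod B) y s c :
  iterDelta (@dsum_add _ Acompl) (fun u v : B g => u - v) s
    (fun c => F (dsum_add y (extend0 c)) g) c
  = iterDelta (@dsum_add I A) (@dprod_sub I B) (map extend0 s) F
      (dsum_add y (extend0 c)) g.
Proof.
elim: s c => [|d s IH] c //=.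
by rewrite /Delta /dprod_sub !IH extend0_add dsum_addA.
Qed.

(* Indeed, for fixed
   x_g the map c |-> F (x_g + c) g on ⊕_{l<>g} A_l vanishes at finite
   order, so it is translation invariant by rigidity. *)
Lemma component_of_vanishing (hHom : hom_trivial A B g) k (F : dsum A -> dprod B) :
  vanS k F -> forall x, F x g = F (single (x g)) g.
Proof.
move=> HV x.
pose G c := F (dsum_add (single (x g)) (extend0 c)) g.
have HG : vanishes (@dsum_add _ Acompl) (fun u v : B g => u - v) 0 k G.
  by move=> s hs; apply: funext => c; rewrite /G iterDelta_extend0 HV // size_map.
have := vanishing_translation_invariant (@dsum_add0 _ _) hHom HG
          (dsum_zero _) (restrict x).
rewrite /G dsum_add0 -(dsum_split x) => ->.
by congr (F _ g); apply: dsum_ext => i /=; rewrite /extend0_fun; case: pselect => [e|e]; rewrite addr0.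
Qed.
End Complement.

Lemma prodmap_of_vanishing (I : Type) (A B : I -> zmodType)
  (hHom : forall g, hom_trivial A B g) k (F : dsum A -> dprod B) :
  vanishes (@dsum_add I A) (@dprod_sub I B) (dprod_zero B) k F ->
  F = prodmap (fun g (a : A g) => F (single a) g).
Proof.
move=> HV; apply: funext => x; apply: functional_extensionality_dep => g.
exact: (component_of_vanishing (hHom g) HV).
Qed.

Lemma fdegS_le_finite (I : Type) (A B : I -> zmodType)
  (hHom : forall g, hom_trivial A B g) (n : extnat) (hn : n <> PosInf)
  (F : dsum A -> dprod B) :
  ext_le (fdegS F) n <->
  exists f : forall g, A g -> B g, F = prodmap f /\ forall g, ext_le (fdegZ (f g)) n.
Proof.
split=> [HF | [f [-> Hf]]]; last exact/fdegS_prodmap_le.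
have [k Hk] := deg_bound_finite hn (proj1 (fdegS_leP F n) HF).
have EF := prodmap_of_vanishing hHom Hk.
by exists (fun g (a : A g) => F (single a) g); split; last apply/fdegS_prodmap_le; rewrite -EF.
Qed.

Theorem theorem3 (Γ : Type) (A B : Γ -> zmodType) (hne : inhabited Γ)
  (hHom : forall g : Γ, hom_trivial A B g) :
  (* (a) *)
  (forall f : forall g, A g -> B g,
     is_sup (fun g => fdegZ (f g)) (fdegS (prodmap f)))
  /\
  (* (b) F_n(A,B) = ∏ F_n(A_g,B_g) for n ∈ N ∪ {-oo} *)
  (forall n : extnat, n <> PosInf ->
     forall F : dsum A -> dprod B,
       ext_le (fdegS F) n <->
       exists f : forall g, A g -> B g,
         F = prodmap f /\ forall g, ext_le (fdegZ (f g)) n)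
  /\
  (* (c) F(A,B) = ⋃_{n<oo} ∏ F_n(A_g,B_g) ⊆ ∏ F(A_g,B_g) *)
  (forall F : dsum A -> dprod B,
     ((exists n : extnat, n <> PosInf /\ ext_le (fdegS F) n) <->
      (exists n : extnat, n <> PosInf /\
         exists f : forall g, A g -> B g,
           F = prodmap f /\ forall g, ext_le (fdegZ (f g)) n))
     /\
     ((exists n : extnat, n <> PosInf /\
         exists f : forall g, A g -> B g,
           F = prodmap f /\ forall g, ext_le (fdegZ (f g)) n) ->
      exists f : forall g, A g -> B g,
        F = prodmap f /\
        forall g, exists m : extnat, m <> PosInf /\ ext_le (fdegZ (f g)) m)).
Proof.
have partb := fdegS_le_finite hHom.
split; first by move=> f; apply: is_sup_of_bounds => e; exact: fdegS_prodmap_le.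
split; first exact: partb.
move=> F; split.
- by split=> -[n [hn H]]; exists n; split => //; apply/(partb n hn).
- by case=> n [hn [f [Ef Hf]]]; exists f; split => // g; exists n.
Qed.
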